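(* Let $W$ be a neat, upward-restricted layered wheel with rooted tree $T$. Then every class $\mathcal F$ of finite induced subgraphs of $W$ that satisfies the bounded-branch property in $W$ has bounded treewidth (i.e., there is a constant $c$ with $\operatorname{tw}(G')\le c$ for all $G'\in\mathcal F$).
   Context: A layered wheel is a countably infinite graph $W$ on the same vertex set as a countably infinite, locally finite (every node has finite degree) rooted tree $T$ embedded in the plane, such that: (1) for every natural number $n$, the set $L_n$ of nodes at distance $n$ from the root of $T$ (the $n$-th layer) induces in $W$ a finite path which visits the nodes of $L_n$ in the left-to-right order given by the planar embedding of $T$; the edges of $W$ with both endpoints in a common layer are the layer edges, and their set is denoted $E_L$; (2) every edge of $W$ not in $E_L$ joins two nodes one of which is an ancestor of the other in $T$; (3) there is a finite bound on the number of vertices of any path in $T$ consisting only of nodes of degree $2$ in $T$. A node is considered its own ancestor and descendant. $W$ is neat if $T$ has no leaf. $W$ is upward-restricted if there is an integer $t$ such that for every node $v$ of $T$ there is a set $X_v$ of at most $t$ ancestors of $v$ such that, in $W - E_L$, every edge with exactly one endpoint among the descendants of $v$ has its other endpoint in $X_v$. A downward path in $T$ starting at $v$ is a maximal (possibly infinite) path starting at $v$ that iteratively moves from the current node to one of its children as long as the current node is not a leaf. A family $\mathcal F$ of induced subgraphs of $W$ satisfies the bounded-branch property (in $W$) if there is an integer $h$ such that for every $G'\in\mathcal F$ and every $v\in V(T)$ (not necessarily in $V(G')$), there is a downward path in $T$ starting at $v$ containing at most $h$ vertices of $G'$. *)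

From mathcomp Require Import all_boot.
Set Implicit Arguments.
Unset Strict Implicit.
Unset Printing Implicit Defensive.

(* Rooted plane tree T on the vertex set nat (countably infinite).     *)
(*   parent : parent map (its value at r is irrelevant)                *)
(*   depth  : distance to the root (so L_n = [set v | depth v = n])     *)
(*   pos    : left-to-right rank of a node inside its layer, coming     *)
(*            from the planar embedding                                 *)

Definition child (r : nat) (parent : nat -> nat) (u v : nat) : Prop :=
  u <> r /\ parent u = v.

Definition tadj (r : nat) (parent : nat -> nat) (u v : nat) : Prop :=
  child r parent u v \/ child r parent v u.

Definition ancestor (parent depth : nat -> nat) (u v : nat) : Prop :=
  exists k, k <= depth v /\ iter k parent v = u.

Definition leaf (r : nat) (parent : nat -> nat) (v : nat) : Prop :=
  forall u, ~ child r parent u v.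

Definition deg2 (r : nat) (parent : nat -> nat) (v : nat) : Prop :=
  exists a b, a <> b /\ tadj r parent v a /\ tadj r parent v b /\
    forall c, tadj r parent v c -> c = a \/ c = b.

Definition tpath (r : nat) (parent : nat -> nat) (p : seq nat) : Prop :=
  uniq p /\ forall i, i.+1 < size p -> tadj r parent (nth 0 p i) (nth 0 p i.+1).

Definition rooted_plane_tree (r : nat) (parent depth pos : nat -> nat) : Prop :=
  [/\ depth r = 0,
      (forall v, v <> r -> depth v = (depth (parent v)).+1),
      (forall v, exists l : seq nat, forall u, child r parent u v -> u \in l),
      (forall u v, depth u = depth v -> pos u = pos v -> u = v) &
      (* planarity: the left-to-right order is compatible with parents *)
      (forall u v, u <> r -> v <> r -> depth u = depth v ->
          pos u < pos v -> pos (parent u) <= pos (parent v))].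

Definition layer_consecutive (depth pos : nat -> nat) (u v : nat) : Prop :=
  depth u = depth v /\ u <> v /\
  ~ (exists w, depth w = depth u /\
       ((pos u < pos w < pos v) \/ (pos v < pos w < pos u))).

Definition layered_wheel (r : nat) (parent depth pos : nat -> nat)
    (adjW : nat -> nat -> Prop) : Prop :=
  rooted_plane_tree r parent depth pos /\
  ((forall u v, adjW u v -> adjW v u) /\ (forall v, ~ adjW v v)) /\
  [/\
      (forall u v, depth u = depth v -> (adjW u v <-> layer_consecutive depth pos u v)),
      (forall u v, adjW u v -> depth u <> depth v ->
          ancestor parent depth u v \/ ancestor parent depth v u) &
      (exists h, forall p, tpath r parent p ->
          (forall x, x \in p -> deg2 r parent x) -> size p <= h)].

Definition neat (r : nat) (parent : nat -> nat) : Prop :=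
  forall v, ~ leaf r parent v.

Definition upward_restricted (r : nat) (parent depth : nat -> nat)
    (adjW : nat -> nat -> Prop) : Prop :=
  exists t : nat, forall v, exists X : seq nat,
    [/\ size X <= t,
        (forall x, x \in X -> ancestor parent depth x v) &
        (forall x y, adjW x y -> depth x <> depth y ->
            ancestor parent depth v x -> ~ ancestor parent depth v y ->
            y \in X)].

(* downward path starting at v: p 0 = v, moves to a child while the current
   node is not a leaf; once at a leaf it stays there (encoding a finite
   maximal path); its vertex set is the range of p *)
Definition downward_path (r : nat) (parent : nat -> nat) (v : nat)
    (p : nat -> nat) : Prop :=
  p 0 = v /\
  forall i, (~ leaf r parent (p i) -> child r parent (p i.+1) (p i)) /\
            (leaf r parent (p i) -> p i.+1 = p i).

Definition at_most_on_path (S : seq nat) (p : nat -> nat) (h : nat) : Prop :=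
  forall l : seq nat, uniq l ->
    (forall x, x \in l -> x \in S /\ exists i, p i = x) -> size l <= h.

(* Finite induced subgraphs of W are identified with their (finite) vertex
   sets S : seq nat; F is a class of them. *)
Definition bounded_branch (r : nat) (parent : nat -> nat)
    (F : seq nat -> Prop) : Prop :=
  exists h, forall S, F S -> forall v : nat,
    exists p, downward_path r parent v p /\ at_most_on_path S p h.

(* The decomposition tree has nodes 'I_n.+1, root ord0, and an edge     *)
(* between i and tpar i for every i <> 0 (with tpar i < i).            *)
Definition tree_decomposition (adjW : nat -> nat -> Prop) (S : seq nat)
    (c : nat) : Prop :=
  exists (n : nat) (tpar : 'I_n.+1 -> 'I_n.+1) (B : 'I_n.+1 -> seq nat),
  (forall i : 'I_n.+1, 0 < i -> tpar i < i) /\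
  [/\
      (forall i x, x \in B i -> x \in S),
      (forall i, size (undup (B i)) <= c.+1),
      (forall x, x \in S -> exists i, x \in B i),
      (forall x y, x \in S -> y \in S -> adjW x y ->
          exists i, x \in B i /\ y \in B i) &
      (forall x (i j : 'I_n.+1), x \in B i -> x \in B j ->
          connect [rel a b | [&& x \in B a, x \in B b &
                     ((a != ord0) && (tpar a == b)) || ((b != ord0) && (tpar b == a))]] i j)].

Definition tw_le (adjW : nat -> nat -> Prop) (S : seq nat) (c : nat) : Prop :=
  tree_decomposition adjW S c.

From mathcomp Require Import all_boot zify boolp.
Set Implicit Arguments.
Unset Strict Implicit.
Unset Printing Implicit Defensive.

(* Fix S with the bounded-branch property for h.  Every vertex v has a child
   g v starting a downward path that meets S as rarely as possible, so the
   greedy path v, g v, g (g v), ... meets S at most h times, and greedy paths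
   form a forest.  Bags are indexed by the gaps of the layers: the places
   between two consecutive nodes of a layer, or at its left end.  The bag of a
   gap holds the S-vertices on the greedy paths of its (at most two) sides and
   of the sides of the gap above it, plus the S-vertices strictly above the
   latter sides that are adjacent to S-vertices below them (at most t per side
   by upward restriction): at most 4h + 2t vertices.  A gap is linked to the
   gap on its left, or to the gap above when it is the leftmost gap or lies
   just right of a greedy child.  Layer edges then lie in the bag of the gap
   between their ends, ancestor edges in the bag of the gap left of their lower
   end, and the gaps whose bag contains x form a subtree topped by the gap left
   of the highest vertex that is not a greedy child and whose greedy path
   contains x. *)

Section RankedRootedTree.
Variables (A : eqType) (nodes : seq A) (root : A) (par : A -> A) (rank : A -> nat).
Hypothesis nodes_uniq : uniq nodes.
Hypothesis root_in : root \in nodes.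
Hypothesis par_in : forall a, a \in nodes -> a != root -> par a \in nodes.
Hypothesis rank_par : forall a, a \in nodes -> a != root -> rank (par a) < rank a.
Hypothesis rank_root : forall a, a \in nodes -> a != root -> rank root < rank a.

Lemma ranked_tree_enum : exists n (node : 'I_n.+1 -> A) (tpar : 'I_n.+1 -> 'I_n.+1),
  [/\ node ord0 = root, injective node, forall i, node i \in nodes,
      forall a, a \in nodes -> exists i, node i = a &
      forall i : 'I_n.+1, 0 < i -> tpar i < i /\ node (tpar i) = par (node i)].
Proof.
pose s := sort (relpre rank leq) nodes.
have mem_s a : (a \in s) = (a \in nodes) by rewrite mem_sort.
have uniq_s : uniq s by rewrite sort_uniq.
have rank_mono i j : i < size s -> j < size s -> i <= j ->
    rank (nth root s i) <= rank (nth root s j).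
  move=> i_lt j_lt; apply: (sorted_leq_nth (leT := relpre rank leq)) => //.
  - by move=> ? ? ? /=; apply: leq_trans.
  - by move=> ? /=.
  - by apply: sort_sorted => a b; rewrite /= leq_total.
have size_s : size s = (size s).-1.+1.
  by rewrite prednK // -has_predT; apply/hasP; exists root; rewrite ?mem_s.
set n := (size s).-1 in size_s.
pose node (i : 'I_n.+1) := nth root s i.
have node_in i : node i \in nodes by rewrite -mem_s mem_nth // size_s.
have node_inj : injective node.
  by move=> i j /eqP; rewrite nth_uniq ?size_s // => /eqP /val_inj.
have index_lt a : a \in nodes -> index a s < n.+1 by rewrite -size_s index_mem mem_s.
have node0 : node ord0 = root.
  apply/eqP/negPn/negP => node0_root.
  have := rank_mono 0 (index root s); rewrite size_s index_lt // nth_index ?mem_s //.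
  by move/(_ isT isT isT); rewrite leqNgt (rank_root (node_in ord0) node0_root).
pose tpar (i : 'I_n.+1) : 'I_n.+1 := inord (index (par (node i)) s).
exists n, node, tpar; split=> // [a a_in|i i_gt0].
  by exists (Ordinal (index_lt a a_in)); rewrite /node nth_index ?mem_s.
have node_root : node i != root by rewrite -node0 (inj_eq node_inj) -val_eqE /= -lt0n.
have par_i := par_in (node_in i) node_root.
have node_tpar : node (tpar i) = par (node i).
  by rewrite /node /tpar inordK ?index_lt // nth_index ?mem_s.
split=> //; rewrite ltnNge; apply/negP => tpar_ge.
have := rank_mono i (tpar i); rewrite size_s !ltn_ord tpar_ge; move/(_ isT isT isT).
by rewrite -/(node i) -/(node (tpar i)) node_tpar leqNgt rank_par.
Qed.

(* [home x a] marks the topmost node whose bag contains [x]; climbing parents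
   from any bag containing [x] reaches it, which gives connectivity. *)
Lemma tree_decomposition_of_rooted_bags (adjW : nat -> nat -> Prop) (S : seq nat)
    (c : nat) (bag : A -> seq nat) (home : nat -> A -> Prop) :
  (forall a, a \in nodes -> {subset bag a <= S}) ->
  (forall a, a \in nodes -> size (undup (bag a)) <= c.+1) ->
  (forall x, x \in S -> exists2 a, a \in nodes & x \in bag a) ->
  (forall x y, x \in S -> y \in S -> adjW x y ->
     exists2 a, a \in nodes & (x \in bag a) && (y \in bag a)) ->
  (forall x a, a \in nodes -> x \in bag a ->
     home x a \/ a != root /\ x \in bag (par a)) ->
  (forall x a b, a \in nodes -> b \in nodes -> home x a -> home x b -> a = b) ->
  tree_decomposition adjW S c.
Proof.
move=> bag_S bag_size bag_vertex bag_edge bag_up home_uniq.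
have [n [node [tpar [node0 node_inj node_in node_onto tparP]]]] := ranked_tree_enum.
exists n, tpar, (bag \o node); split; first by move=> i /tparP [].
split=> /=.
- by move=> i; apply: bag_S.
- by move=> i; apply: bag_size.
- by move=> x /bag_vertex [a /node_onto [i <-]]; exists i.
- move=> x y xS yS /(bag_edge x y xS yS) [a /node_onto [i <-]].
  by case/andP; exists i.
move=> x i j.
set e := (X in connect X).
have e_sym : symmetric e by move=> a b; rewrite /e /= andbCA orbC.
have climb k (l : 'I_n.+1) : l < k -> x \in bag (node l) ->
    exists2 m, home x (node m) & connect e l m.
  elim: k l => // k IHk l l_lt x_l.
  have [home_l|[l_root x_par]] := bag_up x _ (node_in l) x_l; first by exists l.
  have l_gt0 : 0 < l.
    rewrite lt0n; apply: contraNneq l_root => /eqP l0.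
    by rewrite -node0 (_ : l = ord0) //; exact/val_inj/eqP.
  have [tpar_lt node_tpar] := tparP l l_gt0.
  have x_tpar : x \in bag (node (tpar l)) by rewrite node_tpar.
  have [m home_m tpar_m] := IHk (tpar l) (leq_trans tpar_lt l_lt) x_tpar.
  exists m => //; apply: connect_trans tpar_m; apply: connect1.
  by rewrite /e /= x_l node_tpar x_par -val_eqE /= -lt0n l_gt0 eqxx.
move=> x_i x_j; have [mi home_i i_mi] := climb _ i (ltnSn _) x_i.
have [mj home_j j_mj] := climb _ j (ltnSn _) x_j.
have /node_inj mij := home_uniq x _ _ (node_in mi) (node_in mj) home_i home_j.
by apply: connect_trans i_mi _; rewrite mij sym_connect_sym.
Qed.

End RankedRootedTree.

Definition choose_opt (T : Type) (P : T -> Prop) : option T :=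
  if pselect (exists x, P x) is left ex then Some (proj1_sig (cid ex)) else None.

Variant choose_opt_spec (T : Type) (P : T -> Prop) : option T -> Prop :=
  | ChooseSome x of P x : choose_opt_spec P (Some x)
  | ChooseNone of (forall x, ~ P x) : choose_opt_spec P None.

Lemma choose_optP (T : Type) (P : T -> Prop) : choose_opt_spec P (choose_opt P).
Proof.
rewrite /choose_opt; case: pselect => [ex|nex]; first by constructor; exact: proj2_sig.
by constructor=> x Px; apply: nex; exists x.
Qed.

Lemma ex_argmin (T : Type) (f : T -> nat) (Q : T -> Prop) :
  (exists x, Q x) -> exists2 x, Q x & forall y, Q y -> f x <= f y.
Proof.
move=> [x0 Qx0]; have ex_val : exists n, `[< exists x, Q x /\ f x = n >].
  by exists (f x0); apply/asboolP; exists x0.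
case: (ex_minnP ex_val) => _ /asboolP [x [Qx <-]] f_min; exists x => // y Qy.
by apply: f_min; apply/asboolP; exists y.
Qed.

Lemma size_undup_cat (T : eqType) (s1 s2 : seq T) :
  size (undup (s1 ++ s2)) <= size (undup s1) + size (undup s2).
Proof.
rewrite -size_cat; apply: uniq_leq_size; first exact: undup_uniq.
by move=> x; rewrite mem_undup !mem_cat !mem_undup.
Qed.

Section PlaneTree.
Variables (r : nat) (parent depth pos : nat -> nat).
Hypothesis depth_root : depth r = 0.
Hypothesis depth_parent : forall v, v <> r -> depth v = (depth (parent v)).+1.
Hypothesis children_finite :
  forall v, exists l : seq nat, forall u, child r parent u v -> u \in l.
Hypothesis pos_inj : forall u v, depth u = depth v -> pos u = pos v -> u = v.
Hypothesis pos_parent_mono : forall u v, u <> r -> v <> r -> depth u = depth v ->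
  pos u < pos v -> pos (parent u) <= pos (parent v).
Hypothesis has_child : forall v, exists u, child r parent u v.

Lemma depth_eq0 v : depth v = 0 -> v = r.
Proof. by move=> dv0; apply: contrapT => /depth_parent; rewrite dv0. Qed.

Lemma depth_gt0_neq_root v : 0 < depth v -> v <> r.
Proof. by move=> dv_gt0 vr; rewrite vr depth_root in dv_gt0. Qed.

Lemma depth_parent_pred v : 0 < depth v -> depth (parent v) = (depth v).-1.
Proof. by move=> /depth_gt0_neq_root /depth_parent ->. Qed.

Lemma depth_child u v : child r parent u v -> depth u = (depth v).+1.
Proof. by case=> /depth_parent ->  ->. Qed.

Lemma depth_child_layer c q v : child r parent c q -> depth q = depth (parent v) ->
  0 < depth v -> depth c = depth v.
Proof. by move=> cq dq dv; rewrite (depth_child cq) dq depth_parent_pred ?prednK. Qed.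

Lemma depth_iter_parent k v : k <= depth v -> depth (iter k parent v) = depth v - k.
Proof.
elim: k => [|k IHk] k_le; first by rewrite subn0.
by rewrite iterS depth_parent_pred IHk ?(ltnW k_le) //; lia.
Qed.

Lemma layers_finite D : exists L : seq nat, forall v, depth v <= D -> v \in L.
Proof.
pose children v := proj1_sig (cid (children_finite v)).
have childrenP v u : child r parent u v -> u \in children v :=
  proj2_sig (cid (children_finite v)) u.
elim: D => [|D [L memL]].
  by exists [:: r] => v; rewrite leqn0 => /eqP /depth_eq0 ->; rewrite mem_seq1.
exists (L ++ flatten (map children L)) => v; rewrite leq_eqVlt mem_cat.
case/orP=> [/eqP dv|dv]; last by rewrite memL.
have vr : v <> r by apply: depth_gt0_neq_root; rewrite dv.
apply/orP; right; apply/flattenP; exists (children (parent v)); last exact: childrenP.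
by apply: map_f; apply: memL; move: (depth_parent vr); lia.
Qed.

Definition ancestorb a v :=
  (depth a <= depth v) && (a == iter (depth v - depth a) parent v).

Lemma ancestorP a v : reflect (ancestor parent depth a v) (ancestorb a v).
Proof.
apply: (iffP andP) => [[da_le /eqP ->]|[k [k_le <-]]].
  by exists (depth v - depth a); split; first exact: leq_subr.
rewrite depth_iter_parent // leq_subr; split=> //.
by rewrite (_ : depth v - (depth v - k) = k) //; lia.
Qed.

Lemma ancestorb_depth a v : ancestorb a v -> depth a <= depth v.
Proof. by case/andP. Qed.

Lemma ancestorb_refl v : ancestorb v v.
Proof. by rewrite /ancestorb leqnn subnn eqxx. Qed.

Lemma ancestorb_parent v : 0 < depth v -> ancestorb (parent v) v.
Proof.
move=> dv; rewrite /ancestorb depth_parent_pred // leq_pred.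
have -> : depth v - (depth v).-1 = 1 by lia.
exact: eqxx.
Qed.

Lemma ancestorb_trans b a v : ancestorb a b -> ancestorb b v -> ancestorb a v.
Proof.
move=> /andP [dab /eqP a_def] /andP [dbv /eqP b_def].
rewrite /ancestorb (leq_trans dab dbv) /=.
have -> : depth v - depth a = (depth b - depth a) + (depth v - depth b) by lia.
by rewrite iterD -b_def -a_def.
Qed.

Lemma ancestorb_depth_inj a b v :
  ancestorb a v -> ancestorb b v -> depth a = depth b -> a = b.
Proof. by move=> /andP [_ /eqP a_def] /andP [_ /eqP b_def] dab; rewrite a_def b_def dab. Qed.

Lemma ancestorb_strict a v : ancestorb a v -> a <> v -> ancestorb a (parent v).
Proof.
move=> /andP [dav /eqP a_def] av.
have dav_lt : depth a < depth v.
  by rewrite ltn_neqAle dav andbT; apply: contra_notN av => /eqP da; rewrite a_def da subnn.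
rewrite /ancestorb depth_parent_pred; last by lia.
apply/andP; split; first by lia.
rewrite {1}a_def -iterSr; apply/eqP; congr iter; lia.
Qed.

Lemma pos_lt_parent u w : 0 < depth u -> depth u = depth w ->
  pos (parent u) < pos (parent w) -> pos u < pos w.
Proof.
move=> du duw puw; rewrite ltnNge leq_eqVlt; apply/negP => /orP [/eqP wu|wu].
  by move: puw; rewrite (pos_inj duw (esym wu)) ltnn.
have dw : 0 < depth w by rewrite -duw.
have := pos_parent_mono (depth_gt0_neq_root dw) (depth_gt0_neq_root du) (esym duw) wu.
by rewrite leqNgt puw.
Qed.

Lemma parent_between a b c : 0 < depth a -> depth a = depth b -> depth b = depth c ->
  pos a < pos b < pos c -> parent a = parent c -> parent b = parent a.
Proof.
move=> da dab dbc /andP [ab bc] pac.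
have [db dc] : 0 < depth b /\ 0 < depth c by rewrite -dbc -dab.
have := pos_parent_mono (depth_gt0_neq_root da) (depth_gt0_neq_root db) dab ab.
have := pos_parent_mono (depth_gt0_neq_root db) (depth_gt0_neq_root dc) dbc bc.
rewrite -pac => pba pab; apply: pos_inj; last by apply/eqP; rewrite eqn_leq pba pab.
by rewrite !depth_parent_pred // dab.
Qed.

Definition left_nbr w y := [/\ depth w = depth y, pos w < pos y &
  forall q, depth q = depth y -> ~~ (pos w < pos q < pos y)].

Lemma left_nbr_neq w y : left_nbr w y -> w <> y.
Proof. by case=> _ wy _ wy_eq; rewrite wy_eq ltnn in wy. Qed.

Lemma left_nbr_uniq w w' y : left_nbr w y -> left_nbr w' y -> w = w'.
Proof.
move=> [dw wy w_nbr] [dw' w'y w'_nbr]; apply: pos_inj; first by rewrite dw dw'.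
case: (ltngtP (pos w) (pos w')) => [lt|lt|//].
- by move: (w_nbr _ dw'); rewrite lt w'y.
- by move: (w'_nbr _ dw); rewrite lt wy.
Qed.

Lemma left_nbr_injr w y y' : left_nbr w y -> left_nbr w y' -> y = y'.
Proof.
move=> [dw wy w_nbr] [dw' wy' w'_nbr]; apply: pos_inj; first by rewrite -dw dw'.
case: (ltngtP (pos y) (pos y')) => [lt|lt|//].
- by move: (w'_nbr _ (etrans (esym dw) dw')); rewrite lt wy.
- by move: (w_nbr _ (etrans (esym dw') dw)); rewrite lt wy'.
Qed.

Definition prev y := choose_opt (left_nbr^~ y).

Variant prev_spec y : option nat -> Prop :=
  | PrevSome w of left_nbr w y : prev_spec y (Some w)
  | PrevNone of (forall w, depth w = depth y -> pos y <= pos w) : prev_spec y None.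

Lemma prevP y : prev_spec y (prev y).
Proof.
rewrite /prev; case: choose_optP => [w|no_nbr]; constructor => // w dw.
rewrite leqNgt; apply/negP => wy.
(* the closest node left of [y] is its left neighbour *)
have [m [dm my] m_closest] := ex_argmin (fun m => pos y - pos m)
  (ex_intro (fun m => depth m = depth y /\ pos m < pos y) w (conj dw wy)).
apply: (no_nbr m); split=> // q dq; apply/negP => /andP [mq qy].
by have := m_closest q (conj dq qy); lia.
Qed.

Lemma prev_none y : prev y = None -> forall w, depth w = depth y -> pos y <= pos w.
Proof. by case: prevP. Qed.

Lemma prev_left_nbr w y : left_nbr w y -> prev y = Some w.
Proof.
case: prevP => [w' /left_nbr_uniq w'w /w'w -> //|y_first [dw wy _]].
by move: (y_first w dw); rewrite leqNgt wy.
Qed.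

Lemma prev_some w y : prev y = Some w -> left_nbr w y.
Proof. by case: prevP => // w' w'y [<-]. Qed.

Lemma prev_depth w y : prev y = Some w -> depth w = depth y.
Proof. by case/prev_some. Qed.

Lemma prev_inj w y : depth w = depth y -> prev w = prev y -> w = y.
Proof.
move=> dwy; case: (prevP w) (prevP y) => [u uw|w_first] [u' uy|y_first] //.
  by case=> uu'; apply: left_nbr_injr uw _; rewrite uu'.
move=> _; apply: pos_inj => //; apply/eqP; rewrite eqn_leq.
by rewrite w_first ?y_first.
Qed.

Lemma prev_parent_none w : 0 < depth w -> prev w = None -> prev (parent w) = None.
Proof.
case: (prevP w) => // w_first dw _; case: prevP => // q [dq qpw _].
have [c c_q] := has_child q; have dc := depth_child_layer c_q dq dw; case: c_q => _ cq.
have := w_first c dc; rewrite leqNgt (pos_lt_parent (u := c)) ?cq //.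
by rewrite dc.
Qed.

Lemma left_nbr_parent w y : left_nbr w y -> 0 < depth w ->
  parent w = parent y \/ left_nbr (parent w) (parent y).
Proof.
move=> [dwy wy w_nbr] dw; have dy : 0 < depth y by rewrite -dwy.
have dp : depth (parent w) = depth (parent y) by rewrite !depth_parent_pred // dwy.
have := pos_parent_mono (depth_gt0_neq_root dw) (depth_gt0_neq_root dy) dwy wy.
rewrite leq_eqVlt => /orP [/eqP pwy|pwy]; first by left; apply: pos_inj.
right; split=> // q dq; apply/negP => /andP [wq qy].
have [c c_q] := has_child q; have dc := depth_child_layer c_q dq dy.
case: c_q => _ cq.
have wc : pos w < pos c by apply: pos_lt_parent; rewrite ?cq ?dc.
have cy : pos c < pos y by apply: pos_lt_parent; rewrite ?cq ?dc.
by move: (w_nbr c dc); rewrite wc cy.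
Qed.

Lemma left_nbr_parent_split w y : left_nbr w y -> parent w <> parent y ->
  (forall c, child r parent c (parent w) -> pos c <= pos w) /\
  (forall c, child r parent c (parent y) -> pos y <= pos c).
Proof.
move=> [dwy wy w_nbr] pwy.
have dw : 0 < depth w.
  rewrite lt0n; apply/eqP => /depth_eq0 wr; move: (dwy); rewrite wr depth_root.
  by move/esym/depth_eq0 => yr; move: wy; rewrite wr yr ltnn.
split=> c cp; rewrite leqNgt; apply/negP => lt.
- have dc := depth_child_layer cp erefl dw; case: cp => _ pc.
  have yc : pos y < pos c.
    rewrite ltnNge leq_eqVlt negb_or; apply/andP; split.
      by apply/eqP => /esym/pos_inj; rewrite dc dwy => /(_ erefl) yc; apply: pwy; rewrite -pc -yc.
    by apply: contraNN (w_nbr c (etrans dc dwy)) => cy; rewrite lt cy.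
  have dyc : depth y = depth c by rewrite dc dwy.
  by apply: pwy; apply/esym; apply: (parent_between dw dwy dyc _ (esym pc)); rewrite wy yc.
- have dc := depth_child_layer cp erefl (leq_trans dw (eq_leq dwy)); case: cp => _ pc.
  have cw : pos c < pos w.
    rewrite ltnNge leq_eqVlt negb_or; apply/andP; split.
      by apply/eqP => /pos_inj; rewrite dc dwy => /(_ erefl) wc; apply: pwy; rewrite -pc wc.
    by apply: contraNN (w_nbr c dc) => wc; rewrite lt wc.
  have dcw : depth c = depth w by rewrite dc dwy.
  have dc0 : 0 < depth c by rewrite dcw.
  by apply: pwy; rewrite -pc; apply: (parent_between dc0 dcw dwy _ pc); rewrite cw wy.
Qed.

(* The gap (d, o) of layer d lies just right of the node o, or at the left end
   of the layer when o = None; its right side is the node whose left neighbour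
   is o. *)
Definition gap := (nat * option nat)%type.

Lemma gap_neq_root (ga : gap) : 0 < ga.1 \/ ga.2 != None -> ga != (0, None).
Proof. by case: ga => [[|d] [y|]] []. Qed.

Definition right_side (ga : gap) :=
  choose_opt (fun w => depth w = ga.1 /\ prev w = ga.2).

Lemma right_sideP ga w : right_side ga = Some w <-> depth w = ga.1 /\ prev w = ga.2.
Proof.
rewrite /right_side; case: choose_optP => [w' [dw' pw']|none]; split=> //.
- by case=> <-.
- by case=> dw pw; congr Some; apply: prev_inj; rewrite ?dw' ?pw'.
- by move=> [dw pw]; case: (none w).
Qed.

Lemma right_side_prev y : right_side (depth y, prev y) = Some y.
Proof. exact/right_sideP. Qed.

Section GreedyPaths.
Variables (S : seq nat) (h : nat).
Hypothesis bounded_branch_S :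
  forall v, exists p, downward_path r parent v p /\ at_most_on_path S p h.

Lemma downward_path_child v p : downward_path r parent v p ->
  forall i, child r parent (p i.+1) (p i).
Proof.
move=> [_ step] i; apply: (proj1 (step i)) => p_leaf.
by have [u ui] := has_child (p i); exact: p_leaf ui.
Qed.

Lemma downward_path_depth v p : downward_path r parent v p ->
  forall i, depth (p i) = depth v + i.
Proof.
move=> pv; elim=> [|i IHi]; first by case: pv => -> _; rewrite addn0.
by rewrite (depth_child (downward_path_child pv i)) IHi addnS.
Qed.

Lemma at_most_on_path_tail v p k :
  downward_path r parent v p -> at_most_on_path S p k ->
  (v \in S) <= k /\ at_most_on_path S (fun i => p i.+1) (k - (v \in S)).
Proof.
move=> pv p_le; have p0 : p 0 = v by case: pv.
have on_p x i : p i = x -> exists j, p j = x by exists i.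
have v_le : (v \in S) <= k.
  case: (boolP (v \in S)) => // vS; apply: (p_le [:: v]) => // x.
  by rewrite mem_seq1 => /eqP ->; split; last exact: on_p p0.
split=> // l l_uniq l_sub; case: (boolP (v \in S)) => vS; last first.
  by rewrite subn0; apply: p_le => // x /l_sub [xS [i /on_p]].
have v_notin : v \notin l.
  apply/negP => /l_sub [_ [i pi]].
  by have := downward_path_depth pv i.+1; rewrite pi; lia.
suff : size (v :: l) <= k by rewrite /=; lia.
apply: p_le => [|x]; first by rewrite /= v_notin.
by rewrite in_cons => /orP [/eqP ->|/l_sub [xS [i /on_p]]]; split=> //; exact: on_p p0.
Qed.

Definition cost_le v k := exists p, downward_path r parent v p /\ at_most_on_path S p k.

Lemma cost_le_ex v : exists k, `[< cost_le v k >].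
Proof. by exists h; apply/asboolP; apply: bounded_branch_S. Qed.

Definition branch_cost v := ex_minn (cost_le_ex v).

Lemma branch_costP v :
  cost_le v (branch_cost v) /\ forall k, cost_le v k -> branch_cost v <= k.
Proof.
rewrite /branch_cost; case: ex_minnP => k /asboolP k_cost k_min.
by split=> // k' /asboolP; exact: k_min.
Qed.

Lemma branch_cost_le v : branch_cost v <= h.
Proof. exact: (branch_costP v).2 (bounded_branch_S v). Qed.

Lemma greedy_step v :
  exists u, child r parent u v /\ branch_cost u + (v \in S) <= branch_cost v.
Proof.
have [[p [pv p_le]] _] := branch_costP v.
have [v_le tail_le] := at_most_on_path_tail pv p_le.
have tail_path : downward_path r parent (p 1) (fun i => p i.+1).
  by case: pv => _ step; split=> // i; exact: step i.+1.
exists (p 1); split; first by case: pv (downward_path_child pv 0) => ->.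
by have := (branch_costP (p 1)).2 _ (ex_intro _ _ (conj tail_path tail_le)); lia.
Qed.

Definition greedy_child v := proj1_sig (cid (greedy_step v)).

Lemma greedy_childP v : child r parent (greedy_child v) v /\
  branch_cost (greedy_child v) + (v \in S) <= branch_cost v.
Proof. exact: proj2_sig (cid (greedy_step v)). Qed.

Lemma parent_greedy_child v : parent (greedy_child v) = v.
Proof. by case: (greedy_childP v) => -[]. Qed.

Lemma depth_greedy_child v : depth (greedy_child v) = (depth v).+1.
Proof. exact: depth_child (greedy_childP v).1. Qed.

Lemma depth_iter_greedy k y : depth (iter k greedy_child y) = depth y + k.
Proof. by elim: k => [|k IHk]; rewrite ?addn0 // iterS depth_greedy_child IHk addnS. Qed.

Definition on_greedy y x :=
  (depth y <= depth x) && (x == iter (depth x - depth y) greedy_child y).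

Lemma on_greedyP y x : reflect (exists k, x = iter k greedy_child y) (on_greedy y x).
Proof.
apply: (iffP andP) => [[_ /eqP ->]|[k ->]]; first by eexists.
by rewrite depth_iter_greedy leq_addr addKn.
Qed.

Lemma on_greedy_refl y : on_greedy y y.
Proof. by apply/on_greedyP; exists 0. Qed.

Lemma on_greedy_child y x : on_greedy (greedy_child y) x -> on_greedy y x.
Proof. by move/on_greedyP => [k ->]; apply/on_greedyP; exists k.+1; rewrite iterSr. Qed.

Lemma on_greedy_ancestor y x : on_greedy y x -> ancestorb y x.
Proof.
move/on_greedyP => [k ->]; elim: k => [|k IHk]; first exact: ancestorb_refl.
apply: ancestorb_trans IHk _; rewrite iterS.
by rewrite -{1}(parent_greedy_child (iter k greedy_child y)) ancestorb_parent ?depth_greedy_child.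
Qed.

Lemma on_greedy_between s1 s2 x : on_greedy s1 x -> on_greedy s2 x ->
  depth s1 <= depth s2 -> on_greedy s1 s2.
Proof.
move=> /on_greedyP [k x_def] /on_greedy_ancestor s2x d12.
have j_le : depth s2 - depth s1 <= k.
  by move: (ancestorb_depth s2x); rewrite x_def depth_iter_greedy; lia.
set j := depth s2 - depth s1 in j_le.
have x_jdef : x = iter (k - j) greedy_child (iter j greedy_child s1) by rewrite -iterD subnK.
have jx : ancestorb (iter j greedy_child s1) x.
  by apply: on_greedy_ancestor; rewrite x_jdef; apply/on_greedyP; eexists.
apply/on_greedyP; exists j; apply: (ancestorb_depth_inj s2x jx).
by rewrite depth_iter_greedy /j; lia.
Qed.

Lemma on_greedy_top s1 s2 :
  s2 <> greedy_child (parent s2) -> on_greedy s1 s2 -> s1 = s2.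
Proof.
move=> s2_top /on_greedyP [[|k] s2_def] //.
by case: s2_top; rewrite s2_def iterS parent_greedy_child.
Qed.

Definition greedy_set y := [seq x <- S | on_greedy y x].

Lemma count_traject_greedy n y :
  count (mem S) (traject greedy_child y n) <= branch_cost y.
Proof.
elim: n y => [|n IHn] y //=.
by have := (greedy_childP y).2; have := IHn (greedy_child y); case: (y \in S) => /=; lia.
Qed.

Lemma greedy_set_size y : size (undup (greedy_set y)) <= h.
Proof.
pose K := (\max_(x <- S) depth x).+1.
apply: leq_trans (branch_cost_le y); apply: leq_trans (count_traject_greedy K y).
rewrite -size_filter; apply: uniq_leq_size; first exact: undup_uniq.
move=> x; rewrite mem_undup !mem_filter => /andP [/on_greedyP [k x_def] xS].
have k_lt : k < K.
  rewrite ltnS (leq_trans (leq_addl (depth y) k)) // -depth_iter_greedy -x_def.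
  exact: leq_bigmax_seq.
apply/andP; split; first exact: xS.
by rewrite x_def -(nth_traject _ k_lt) mem_nth ?size_traject.
Qed.

Lemma greedy_set_sub y : {subset greedy_set y <= S}.
Proof. by move=> x; rewrite mem_filter => /andP []. Qed.

Lemma greedy_set_self y : y \in S -> y \in greedy_set y.
Proof. by move=> yS; rewrite mem_filter on_greedy_refl. Qed.

Lemma greedy_set_child y x : x \in greedy_set (greedy_child y) -> x \in greedy_set y.
Proof. by rewrite !mem_filter => /andP [/on_greedy_child -> ->]. Qed.

Definition right_of_greedy y := pos (greedy_child (parent y)) <= pos y.

(* The gap of the layer above lying on the same side as [ga] of the greedy path
   through the parent of the left side of [ga]. *)
Definition gap_above (ga : gap) : gap :=
  match ga with
  | (d.+1, Some y) =>
      if right_of_greedy y then (d, Some (parent y)) else (d, prev (parent y))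
  | (d.+1, None) => (d, None)
  | _ => ga
  end.

Definition gap_parent (ga : gap) : gap :=
  if ga.2 is Some y then
    if y == greedy_child (parent y) then gap_above ga else (ga.1, prev y)
  else gap_above ga.

Definition gap_valid (ga : gap) := if ga.2 is Some y then depth y = ga.1 else True.

Definition gap_side (ga : gap) w := ga.2 = Some w \/ right_side ga = Some w.

Lemma gap_valid_prev d y : depth y = d -> gap_valid (d, prev y).
Proof. by rewrite /gap_valid /=; case E: (prev y) => [w|] // <-; apply: prev_depth. Qed.

Lemma gap_side_depth ga w : gap_valid ga -> gap_side ga w -> depth w = ga.1.
Proof.
by rewrite /gap_valid => + [ga_w|/right_sideP []//]; rewrite ga_w.
Qed.

Lemma gap_above_valid ga :
  gap_valid ga -> gap_valid (gap_above ga) /\ (gap_above ga).1 = ga.1.-1.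
Proof.
case: ga => [[|d] [y|]] //= dy; have dy0 : 0 < depth y by rewrite dy.
have dpy : depth (parent y) = d by rewrite depth_parent_pred // dy.
by case: ifP => _; split=> //; apply: gap_valid_prev.
Qed.

Lemma gap_side_above ga w : gap_valid ga -> 0 < ga.1 -> gap_side ga w ->
  gap_side (gap_above ga) (parent w).
Proof.
case: ga => [[|d] [y|]] //= dy _; last first.
  case=> [//|/right_sideP [/= dw /prev_parent_none pw_first]].
  right; apply/right_sideP; split; first by rewrite depth_parent_pred dw.
  by rewrite pw_first ?dw.
have dy0 : 0 < depth y by rewrite dy.
have dpy : depth (parent y) = d by rewrite depth_parent_pred // dy.
have right_parent w' : left_nbr (parent y) (parent w') ->
    right_side (d, Some (parent y)) = Some (parent w').
  move=> nbr; apply/right_sideP; split; last exact: prev_left_nbr.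
  by case: nbr => <-.
case=> [[<-]|/right_sideP [/= dw /prev_some yw]]; case: ifP => right_y.
- by left.
- by right; rewrite -dpy; apply: right_side_prev.
- by case: (left_nbr_parent yw dy0) => [->|/right_parent]; [left|right].
- case: (left_nbr_parent yw dy0) => [<-|nbr]; first by right; rewrite -dpy right_side_prev.
  have [le_y _] := left_nbr_parent_split yw (left_nbr_neq nbr).
  by move: right_y; rewrite /right_of_greedy le_y //; case: (greedy_childP (parent y)).
Qed.

Lemma gap_above_prev d y : depth y = d.+1 -> y != greedy_child (parent y) ->
  gap_above (d.+1, prev y) = gap_above (d.+1, Some y).
Proof.
move=> dy y_ng; have dy0 : 0 < depth y by rewrite dy.
have dpy : depth (parent y) = d by rewrite depth_parent_pred // dy.
have dg := depth_child_layer (greedy_childP (parent y)).1 erefl dy0.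
have g_ne : pos (greedy_child (parent y)) != pos y.
  by apply/eqP => /(pos_inj dg) gy; rewrite gy eqxx in y_ng.
rewrite /gap_above /=; case E: (prev y) => [w|]; last first.
  have yg : pos y <= pos (greedy_child (parent y)) := prev_none E dg.
  by rewrite /right_of_greedy leqNgt ltn_neqAle eq_sym g_ne yg (prev_parent_none dy0 E).
have [dwy wy w_nbr] := prev_some E; have dw0 : 0 < depth w by rewrite dwy.
case: (left_nbr_parent (prev_some E) dw0) => [pwy|nbr].
  suff -> : right_of_greedy w = right_of_greedy y by rewrite pwy.
  rewrite /right_of_greedy pwy; apply/idP/idP => [gw|gy]; first exact: leq_trans gw (ltnW wy).
  have gy' : pos (greedy_child (parent y)) < pos y by rewrite ltn_neqAle g_ne.
  by rewrite leqNgt; apply: contraNN (w_nbr _ dg) => wg; rewrite wg gy'.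
have [le_w ge_y] := left_nbr_parent_split (prev_some E) (left_nbr_neq nbr).
rewrite /right_of_greedy le_w; last exact: (greedy_childP (parent w)).1.
rewrite leqNgt ltn_neqAle eq_sym g_ne ge_y /=; last exact: (greedy_childP (parent y)).1.
by rewrite (prev_left_nbr nbr).
Qed.

Lemma gap_parent_shape ga : gap_valid ga -> ga != (0, None) ->
  gap_valid (gap_parent ga) /\
  (0 < ga.1 /\ (gap_parent ga).1 = ga.1.-1 \/
   exists y, ga.2 = Some y /\ gap_parent ga = (ga.1, prev y)).
Proof.
case: ga => d [y|] dy ga_ne; rewrite /gap_parent /=; last first.
  by case: d dy ga_ne => // d dy _; split; [exact: (gap_above_valid dy).1 | left].
case: ifP => [/eqP y_g|_]; last by split; [exact: gap_valid_prev | right; exists y].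
have dy0 : 0 < d by rewrite -[d]dy y_g depth_greedy_child.
by have [] := gap_above_valid dy; split=> //; left.
Qed.

Lemma gap_nodes D : exists nodes : seq gap,
  uniq nodes /\ forall ga, ga \in nodes <-> ga.1 <= D /\ gap_valid ga.
Proof.
have [L memL] := layers_finite D.
exists (undup ([seq (d, None) | d <- iota 0 D.+1] ++
  [seq (depth y, Some y) | y <- [seq y <- L | depth y <= D]])).
split=> [|[d o]]; first exact: undup_uniq.
rewrite mem_undup mem_cat; split.
  case/orP => /mapP [z z_in [-> ->]] //=; first by move: z_in; rewrite mem_iota ltnS.
  by move: z_in; rewrite mem_filter => /andP [].
case: o => [y|] [dD dy]; rewrite /gap_valid /= in dD dy; apply/orP; [right|left].
  by rewrite -dy; apply: map_f; rewrite mem_filter memL dy ?dD.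
by apply: map_f; rewrite mem_iota ltnS.
Qed.

Lemma gap_rank D : exists rank : gap -> nat, forall ga, ga.1 <= D -> gap_valid ga ->
  ga != (0, None) -> rank (0, None) < rank ga /\ rank (gap_parent ga) < rank ga.
Proof.
have [L memL] := layers_finite D.
pose M := (\max_(y <- L) pos y).+2.
pose offset (ga : gap) := if ga.2 is Some y then (pos y).+1 else 0.
have offset_lt ga : ga.1 <= D -> gap_valid ga -> offset ga < M.
  case: ga => d [y|] //= dD dy; rewrite !ltnS.
  by apply: leq_bigmax_seq => //; apply: memL; rewrite dy.
exists (fun ga => ga.1 * M + offset ga) => ga dD ga_valid ga_ne; split.
  by case: ga dD ga_valid ga_ne => [[|d] [y|]] //= *; rewrite ?addn0.
have [parent_valid [[d_gt0 d_parent]|[y [ga_y ga_parent]]]] := gap_parent_shape ga_valid ga_ne.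
  have := offset_lt _ (leq_trans (eq_leq d_parent) (leq_trans (leq_pred _) dD)) parent_valid.
  rewrite d_parent; case: (ga.1) d_gt0 => // d _ /=; rewrite mulSn; lia.
rewrite ga_parent ltn_add2l /offset ga_y /=.
by case E: (prev y) => [w|] //; case: (prev_some E).
Qed.

Section Attachments.
Variables (adjW : nat -> nat -> Prop) (t : nat).
Hypothesis upward_restricted_t : forall v, exists X : seq nat,
  [/\ size X <= t,
      (forall x, x \in X -> ancestor parent depth x v) &
      (forall x y, adjW x y -> depth x <> depth y ->
         ancestor parent depth v x -> ~ ancestor parent depth v y -> y \in X)].
Hypothesis adjW_sym : forall u v, adjW u v -> adjW v u.
Hypothesis layer_edges : forall u v, depth u = depth v ->
  (adjW u v <-> layer_consecutive depth pos u v).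
Hypothesis ancestor_edges : forall u v, adjW u v -> depth u <> depth v ->
  ancestor parent depth u v \/ ancestor parent depth v u.

Definition attachments v := [seq a <- S |
  [&& depth a < depth v, ancestorb a v & has (fun z => ancestorb v z && `[< adjW z a >]) S]].

Lemma attachments_size v : size (undup (attachments v)) <= t.
Proof.
have [X [X_size _ X_attach]] := upward_restricted_t v.
apply: leq_trans X_size; apply: uniq_leq_size; first exact: undup_uniq.
move=> a; rewrite mem_undup mem_filter => /andP [/and3P [dav av]].
move=> /hasP [z _ /andP [vz /asboolP za]] _; apply: (X_attach z a za).
- by move: (ancestorb_depth vz); lia.
- exact/ancestorP.
- by move/ancestorP/ancestorb_depth; lia.
Qed.

Lemma attachments_sub v : {subset attachments v <= S}.
Proof. by move=> x; rewrite mem_filter => /andP []. Qed.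

Lemma attachments_depth v a : a \in attachments v -> depth a < depth v.
Proof. by rewrite mem_filter => /andP [/and3P []]. Qed.

Lemma attachments_parent w a :
  a \in attachments w -> a = parent w \/ a \in attachments (parent w).
Proof.
rewrite mem_filter => /andP [/and3P [daw aw a_adj] aS].
have dw : 0 < depth w by lia.
have pw := ancestorb_parent dw.
case: (ltngtP (depth a) (depth (parent w))) => [lt|gt|eq]; last first.
- by left; apply: ancestorb_depth_inj aw pw eq.
- by move: gt daw; rewrite depth_parent_pred //; lia.
have aw_neq : a <> w by move=> aw_eq; rewrite aw_eq ltnn in daw.
right; rewrite mem_filter aS lt ancestorb_strict //= andbT.
case/hasP: a_adj => z zS /andP [wz za]; apply/hasP; exists z => //.
by rewrite za andbT (ancestorb_trans pw wz).
Qed.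

Definition gap_sides (f : nat -> seq nat) (ga : gap) :=
  (if ga.2 is Some y then f y else [::]) ++
  (if right_side ga is Some y then f y else [::]).

Lemma mem_gap_sides f ga x :
  x \in gap_sides f ga <-> exists2 w, gap_side ga w & x \in f w.
Proof.
rewrite /gap_sides /gap_side mem_cat; split; first case/orP.
- by case: ga.2 => [w|] // xw; exists w => //; left.
- by case: (right_side ga) => [w|] // xw; exists w => //; right.
by case=> w [->|->] xw; rewrite xw ?orbT.
Qed.

Lemma gap_sides_size f b ga : (forall w, size (undup (f w)) <= b) ->
  size (undup (gap_sides f ga)) <= b + b.
Proof.
move=> f_size; apply: leq_trans (size_undup_cat _ _) _.
by apply: leq_add; [case: ga.2 | case: right_side].
Qed.

Definition gap_upper ga := gap_sides greedy_set ga ++ gap_sides attachments ga.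

Definition gap_bag ga := gap_sides greedy_set ga ++ gap_upper (gap_above ga).

Lemma mem_gap_upper ga x : (x \in gap_upper ga) =
  (x \in gap_sides greedy_set ga) || (x \in gap_sides attachments ga).
Proof. exact: mem_cat. Qed.

Lemma mem_gap_bag ga x : (x \in gap_bag ga) =
  (x \in gap_sides greedy_set ga) || (x \in gap_upper (gap_above ga)).
Proof. exact: mem_cat. Qed.

Lemma gap_bag_sub ga : {subset gap_bag ga <= S}.
Proof.
move=> x; rewrite mem_gap_bag mem_gap_upper.
case/or3P=> /mem_gap_sides [w _].
- exact: greedy_set_sub.
- exact: greedy_set_sub.
- exact: attachments_sub.
Qed.

Lemma gap_bag_size ga : size (undup (gap_bag ga)) <= 4 * h + 2 * t.
Proof.
have upper_size ga' : size (undup (gap_upper ga')) <= (h + h) + (t + t).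
  apply: leq_trans (size_undup_cat _ _) _.
  exact: leq_add (gap_sides_size _ greedy_set_size) (gap_sides_size _ attachments_size).
apply: leq_trans (size_undup_cat _ _) _.
by apply: leq_trans (leq_add (gap_sides_size _ greedy_set_size) (upper_size _)) _; lia.
Qed.

Lemma gap_upper_sub_bag ga : gap_valid ga -> {subset gap_upper ga <= gap_bag ga}.
Proof.
move=> ga_valid x; rewrite mem_gap_upper mem_gap_bag.
case/orP=> [->//|/mem_gap_sides [w w_side x_w]]; apply/orP; right.
have dw : 0 < depth w by move: (attachments_depth x_w); lia.
have d_gt0 : 0 < ga.1 by rewrite -(gap_side_depth ga_valid w_side).
have pw_side := gap_side_above ga_valid d_gt0 w_side.
rewrite mem_gap_upper; case: (attachments_parent x_w) => [x_pw|x_att].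
  apply/orP; left; apply/mem_gap_sides; exists (parent w) => //.
  by rewrite -x_pw greedy_set_self // (attachments_sub x_w).
by apply/orP; right; apply/mem_gap_sides; exists (parent w).
Qed.

Lemma gap_upper_sub_parent ga : gap_valid ga -> 0 < ga.1 ->
  {subset gap_upper (gap_above ga) <= gap_bag (gap_parent ga)}.
Proof.
move=> ga_valid d_gt0 x x_up.
have x_bag := gap_upper_sub_bag (gap_above_valid ga_valid).1 x_up.
case: ga ga_valid d_gt0 x_up x_bag => [[|d] [y|]] // dy _ x_up x_bag.
rewrite /gap_parent /=; case: ifP => // /negbT y_ng.
by rewrite mem_gap_bag (gap_above_prev dy y_ng) x_up orbT.
Qed.

Definition gap_home x ga := exists s,
  [/\ s <> greedy_child (parent s), x \in greedy_set s & ga = (depth s, prev s)].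

Lemma gap_home_uniq x ga ga' : gap_home x ga -> gap_home x ga' -> ga = ga'.
Proof.
move=> [s1 [top1 + ->]] [s2 [top2 + ->]]; rewrite !mem_filter.
move=> /andP [g1 _] /andP [g2 _]; case: (leqP (depth s1) (depth s2)) => [le|/ltnW le].
  by rewrite (on_greedy_top top2 (on_greedy_between g1 g2 le)).
by rewrite (on_greedy_top top1 (on_greedy_between g2 g1 le)).
Qed.

Lemma gap_greedy_up ga x : gap_valid ga -> x \in gap_sides greedy_set ga ->
  gap_home x ga \/ ga != (0, None) /\ x \in gap_bag (gap_parent ga).
Proof.
move=> ga_valid /mem_gap_sides [w w_side x_w].
have dw := gap_side_depth ga_valid w_side.
case: (eqVneq w (greedy_child (parent w))) => [w_g|w_top].
  have dw0 : 0 < depth w by rewrite w_g depth_greedy_child.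
  have d_gt0 : 0 < ga.1 by rewrite -dw.
  right; split; first exact: gap_neq_root (or_introl d_gt0).
  apply: gap_upper_sub_parent => //; rewrite mem_gap_upper; apply/orP; left.
  apply/mem_gap_sides; exists (parent w); first exact: gap_side_above.
  by apply: greedy_set_child; rewrite -w_g.
case: w_side => [ga_w|/right_sideP [dw' prev_w]].
  right; split; first by apply: gap_neq_root; right; rewrite ga_w.
  rewrite /gap_parent ga_w (negbTE w_top) mem_gap_bag; apply/orP; left.
  by apply/mem_gap_sides; exists w => //; right; rewrite -dw right_side_prev.
left; exists w; split=> //; first exact/eqP.
by case: ga dw' prev_w {ga_valid dw} => ? ? /= -> ->.
Qed.

Lemma gap_bag_up ga x : gap_valid ga -> x \in gap_bag ga ->
  gap_home x ga \/ ga != (0, None) /\ x \in gap_bag (gap_parent ga).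
Proof.
move=> ga_valid; rewrite mem_gap_bag => /orP [x_greedy|x_up]; first exact: gap_greedy_up.
case: (posnP ga.1) => [d0|d_gt0]; last first.
  right; split; first exact: gap_neq_root (or_introl d_gt0).
  exact: gap_upper_sub_parent.
have above_id : gap_above ga = ga by case: ga d0 {ga_valid x_up} => ? ? /= ->.
move: x_up; rewrite above_id mem_gap_upper => /orP [x_greedy|/mem_gap_sides [w w_side]].
  exact: gap_greedy_up.
by move/attachments_depth; rewrite (gap_side_depth ga_valid w_side) d0.
Qed.

Lemma gap_bag_layer_edge x y : x \in S -> y \in S -> left_nbr x y ->
  (x \in gap_bag (depth x, Some x)) && (y \in gap_bag (depth x, Some x)).
Proof.
move=> xS yS [dxy xy x_nbr]; rewrite !mem_gap_bag; apply/andP; split; apply/orP; left.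
  by apply/mem_gap_sides; exists x; [left|exact: greedy_set_self].
apply/mem_gap_sides; exists y; last exact: greedy_set_self.
by right; apply/right_sideP; split=> //; apply: prev_left_nbr.
Qed.

Lemma gap_bag_ancestor_edge u w : u \in S -> w \in S -> adjW u w ->
  ancestorb w u -> depth w < depth u ->
  (u \in gap_bag (depth u, prev u)) && (w \in gap_bag (depth u, prev u)).
Proof.
move=> uS wS uw wu dwu; have ga_valid := gap_valid_prev (erefl (depth u)).
have u_side : gap_side (depth u, prev u) u by right; exact: right_side_prev.
have du : 0 < depth u by lia.
rewrite !mem_gap_bag; apply/andP; split; apply/orP; [left|right].
  by apply/mem_gap_sides; exists u => //; exact: greedy_set_self.
have pu_side := gap_side_above ga_valid du u_side.
rewrite mem_gap_upper; apply/orP.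
case: (ltngtP (depth w) (depth (parent u))) => [lt|gt|eq].
- right; apply/mem_gap_sides; exists (parent u) => //.
  rewrite mem_filter wS lt ancestorb_strict //=; last by move=> wu_eq; rewrite wu_eq ltnn in dwu.
  by rewrite andbT; apply/hasP; exists u => //; rewrite ancestorb_parent //=; apply/asboolP.
- by move: gt dwu; rewrite depth_parent_pred //; lia.
- left; apply/mem_gap_sides; exists (parent u) => //.
  by rewrite -(ancestorb_depth_inj wu (ancestorb_parent du) eq) greedy_set_self.
Qed.

Lemma adjW_left_nbr u v : depth u = depth v -> adjW u v -> pos u < pos v -> left_nbr u v.
Proof.
move=> duv /(layer_edges duv) [_ [_ no_between]] uv; split=> // q dq.
by apply/negP => between; apply: no_between; exists q; split; [rewrite dq duv|left].
Qed.

Lemma gap_bag_edge x y : x \in S -> y \in S -> adjW x y ->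
  exists ga, [/\ gap_valid ga, ga.1 = depth x \/ ga.1 = depth y,
                 x \in gap_bag ga & y \in gap_bag ga].
Proof.
move=> xS yS xy; case: (eqVneq (depth x) (depth y)) => [dxy|/eqP dxy].
  case: (ltngtP (pos x) (pos y)) => [lt|gt|eq].
  - have /andP [bx by'] := gap_bag_layer_edge xS yS (adjW_left_nbr dxy xy lt).
    by exists (depth x, Some x); split; [|left|..].
  - have yx := adjW_left_nbr (esym dxy) (adjW_sym xy) gt.
    have /andP [by' bx] := gap_bag_layer_edge yS xS yx.
    by exists (depth y, Some y); split; [|right|..].
  - by case: ((layer_edges dxy).1 xy) => _ [xy_neq _]; case: xy_neq; apply: pos_inj.
case: (ancestor_edges xy dxy) => /ancestorP anc.
- have lt : depth x < depth y by move: (ancestorb_depth anc) dxy; lia.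
  have /andP [by' bx] := gap_bag_ancestor_edge yS xS (adjW_sym xy) anc lt.
  by exists (depth y, prev y); split; [exact: gap_valid_prev|right|..].
- have lt : depth y < depth x by move: (ancestorb_depth anc) dxy; lia.
  have /andP [bx by'] := gap_bag_ancestor_edge xS yS xy anc lt.
  by exists (depth x, prev x); split; [exact: gap_valid_prev|left|..].
Qed.

Lemma gap_tree_decomposition : tree_decomposition adjW S (4 * h + 2 * t).
Proof.
pose D := \max_(z <- S) depth z.
have S_depth z : z \in S -> depth z <= D by move=> zS; apply: leq_bigmax_seq.
have [nodes [nodes_uniq mem_nodes]] := gap_nodes D.
have [rank rank_parent] := gap_rank D.
apply: (@tree_decomposition_of_rooted_bags _ nodes (0, None) gap_parent rank) => //.
- exact/mem_nodes.
- move=> ga /mem_nodes [dD ga_valid] ga_ne.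
  have [parent_valid shape] := gap_parent_shape ga_valid ga_ne.
  apply/mem_nodes; split=> //.
  by case: shape => [[_ ->]|[y [_ ->]]] //; exact: leq_trans (leq_pred _) dD.
- by move=> ga /mem_nodes [dD ga_valid] ga_ne; case: (rank_parent ga dD ga_valid ga_ne).
- by move=> ga /mem_nodes [dD ga_valid] ga_ne; case: (rank_parent ga dD ga_valid ga_ne).
- by move=> ga _; apply: gap_bag_sub.
- by move=> ga _; apply: leq_trans (gap_bag_size ga) _.
- move=> x xS; exists (depth x, Some x); first by apply/mem_nodes; split=> //; apply: S_depth.
  rewrite mem_gap_bag; apply/orP; left.
  by apply/mem_gap_sides; exists x; [left|exact: greedy_set_self].
- move=> x y xS yS xy; have [ga [ga_valid dga bx by']] := gap_bag_edge xS yS xy.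
  exists ga; last by rewrite bx by'.
  by apply/mem_nodes; split=> //; case: dga => ->; apply: S_depth.
- by move=> x ga /mem_nodes [_ ga_valid]; apply: gap_bag_up.
- by move=> x ga ga' _ _; apply: gap_home_uniq.
Qed.

End Attachments.
End GreedyPaths.
End PlaneTree.

Theorem theorem1p12 (r : nat) (parent depth pos : nat -> nat)
    (adjW : nat -> nat -> Prop) (F : seq nat -> Prop) :
  layered_wheel r parent depth pos adjW ->
  neat r parent ->
  upward_restricted r parent depth adjW ->
  bounded_branch r parent F ->
  exists c : nat, forall S, F S -> tw_le adjW S c.
Proof.
move=> [[depth_r depth_parent children_fin pos_inj planar] [[adjW_sym _] [layer anc _]]].
move=> no_leaf [t upward] [h bounded].
have has_child v : exists u, child r parent u v.
  by apply: contrapT => no_child; apply: (no_leaf v) => u u_child; apply: no_child; exists u.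
exists (4 * h + 2 * t) => S FS.
exact: (gap_tree_decomposition depth_r depth_parent children_fin pos_inj planar has_child
  (bounded S FS) upward adjW_sym layer anc).
Qed.
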